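(* Let $p\notin\{2,11\}$ be a prime with $p\equiv2\pmod3$ such that all three roots of $P(X)=X^3-X^2-X-1$ lie in $\mathbb Q_p$. For each $\lambda\in\Lambda$ let $\lambda^{1/3}$ denote the unique element of $\mathbb Z_p$ whose cube is $\lambda$. Then $\sum_{\lambda\in\Lambda}c_\lambda\lambda^{1/3}=0$.
   Context: $\Lambda$ is the set of roots of $P(X)=X^3-X^2-X-1$ (here contained in $\mathbb Z_p^\times$), and $c_\lambda=\lambda P'(\lambda)^{-1}$. Since $p\equiv2\pmod 3$, every element of $\mathbb Z_p^\times$ has exactly one cube root in $\mathbb Z_p$. *)

From mathcomp Require Import all_boot all_order all_algebra.
Set Implicit Arguments. Unset Strict Implicit. Unset Printing Implicit Defensive.
Import GRing.Theory.
Local Open Scope ring_scope.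

(* The ring Z_p of p-adic integers is realised as the inverse limit
   lim_n Z/p^(n+1): an element is a sequence x with x n : 'Z_(p^(n+1)),
   compatible with the reduction maps Z/p^(n+2) -> Z/p^(n+1).
   Ring operations / equalities in Z_p are levelwise. *)
Definition padic_seq (p : nat) := forall n : nat, 'Z_(p ^ n.+1).

Definition padic_coherent (p : nat) (x : padic_seq p) : Prop :=
  forall n : nat, ((x n.+1 : nat) %% p ^ n.+1)%N = (x n : nat).

Definition Ppoly (R : nzRingType) : {poly R} := 'X^3 - 'X^2 - 'X - 1.

From mathcomp Require Import all_boot all_order all_algebra.
From mathcomp Require Import cyclic ring.
Set Implicit Arguments. Unset Strict Implicit. Unset Printing Implicit Defensive.
Import GRing.Theory.
Local Open Scope ring_scope.

(* Modulo P one has (X^2 - X)^3 = 2X, so for a root lam with cube root mu the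
   quotient t = (lam^2 - lam)/mu is a cube root of 2.  Since p = 2 (mod 3),
   cubing is injective on the units of Z/p^k, hence t does not depend on lam,
   and lam * mu = lam (lam^2 - lam) / t = (lam + 1) / t.  The sum is therefore
   t^-1 * sum (lam + 1)/P'(lam), which vanishes by partial fractions since
   deg (X + 1) < deg P - 1.  Partial fractions need the differences of roots to
   be units at every level: two roots congruent mod p differ by a nilpotent,
   and as the discriminant -44 of P is a unit they must then coincide. *)

Section CubicRoots.
Variable R : comUnitRingType.
Implicit Types x y m t : R.

Lemma root_PpolyE x : root (Ppoly R) x = (x ^+ 3 - x ^+ 2 - x - 1 == 0).
Proof. by rewrite /root /Ppoly !hornerE. Qed.

Lemma deriv_PpolyE x : (Ppoly R)^`().[x] = 3%:R * x ^+ 2 - 2%:R * x - 1.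
Proof. by rewrite /Ppoly !derivE !hornerE /=; ring. Qed.

Lemma Ppoly_root_unit x : root (Ppoly R) x -> x \is a GRing.unit.
Proof.
rewrite root_PpolyE => /eqP Px; apply/unitrPr; exists (x ^+ 2 - x - 1).
by rewrite -[RHS]add0r -Px; ring.
Qed.

Lemma Ppoly_deriv_unit x :
  (44%:R : R) \is a GRing.unit -> root (Ppoly R) x ->
  (Ppoly R)^`().[x] \is a GRing.unit.
Proof.
rewrite root_PpolyE deriv_PpolyE => u44 /eqP Px.
have bezout : (44%:R : R) = (24%:R * x - 46%:R) * (x ^+ 3 - x ^+ 2 - x - 1)
    + (2%:R + 18%:R * x - 8%:R * x ^+ 2) * (3%:R * x ^+ 2 - 2%:R * x - 1).
  by ring.
by move: u44; rewrite bezout Px mulr0 add0r unitrM => /andP[].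
Qed.

Lemma Ppoly_root_eq_nilpotent x y k :
  (44%:R : R) \is a GRing.unit -> root (Ppoly R) x -> root (Ppoly R) y ->
  (x - y) ^+ k = 0 -> x = y.
Proof.
move=> u44 Px Py dk; have uP := Ppoly_deriv_unit u44 Px.
move: Px Py; rewrite !root_PpolyE => /eqP Px /eqP Py.
set d := x - y; set s := (2%:R * x + y - 1) / (Ppoly R)^`().[x].
have dPx : d * (Ppoly R)^`().[x] = d * d * (2%:R * x + y - 1).
  apply/eqP; rewrite -subr_eq0 deriv_PpolyE -[X in _ == X](subrr 0) -{1}Px -Py.
  by apply/eqP; rewrite /d; ring.
have d_sq : d = d * (d * s) by rewrite /s !mulrA -dPx mulrK.
have d_fix j : d = d * (d * s) ^+ j.
  by elim: j => [|j IH]; rewrite ?mulr1 // exprS mulrA -d_sq.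
by apply/eqP; rewrite -subr_eq0 -/d (d_fix k) exprMn dk mul0r mulr0.
Qed.

Lemma Ppoly_roots_quadratic x y :
  root (Ppoly R) x -> root (Ppoly R) y -> (x - y) \is a GRing.unit ->
  x ^+ 2 + x * y + y ^+ 2 - x - y - 1 = 0.
Proof.
rewrite !root_PpolyE => /eqP Px /eqP Py uxy; apply: (mulrI uxy).
by rewrite mulr0 -[RHS](subrr 0) -{1}Px -Py; ring.
Qed.

Lemma Ppoly_roots_sum (x y z : R) :
  root (Ppoly R) x -> root (Ppoly R) y -> root (Ppoly R) z ->
  (x - y) \is a GRing.unit -> (x - z) \is a GRing.unit -> (y - z) \is a GRing.unit ->
  x + y + z = 1.
Proof.
move=> Px Py Pz uxy uxz uyz.
apply/eqP; rewrite -subr_eq0; apply/eqP; apply: (mulrI uyz); rewrite mulr0.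
rewrite -[RHS](subrr 0) -{1}(Ppoly_roots_quadratic Px Py uxy).
by rewrite -(Ppoly_roots_quadratic Px Pz uxz); ring.
Qed.

Lemma deriv_Ppoly_at_root (x y z : R) :
  root (Ppoly R) x -> root (Ppoly R) y -> root (Ppoly R) z ->
  (x - y) \is a GRing.unit -> (x - z) \is a GRing.unit -> (y - z) \is a GRing.unit ->
  (Ppoly R)^`().[x] = (x - y) * (x - z).
Proof.
move=> Px Py Pz uxy uxz uyz.
have -> : z = 1 - x - y by rewrite -(Ppoly_roots_sum Px Py Pz uxy uxz uyz); ring.
apply/eqP; rewrite -subr_eq0 -(Ppoly_roots_quadratic Px Py uxy) deriv_PpolyE.
by apply/eqP; ring.
Qed.

Lemma Ppoly_partial_fractions3 (x y z : R) :
  root (Ppoly R) x -> root (Ppoly R) y -> root (Ppoly R) z ->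
  (x - y) \is a GRing.unit -> (x - z) \is a GRing.unit -> (y - z) \is a GRing.unit ->
  (x + 1) / (Ppoly R)^`().[x] + (y + 1) / (Ppoly R)^`().[y]
    + (z + 1) / (Ppoly R)^`().[z] = 0.
Proof.
move=> Px Py Pz uxy uxz uyz.
have [uyx uzx uzy] : [/\ (y - x) \is a GRing.unit, (z - x) \is a GRing.unit
    & (z - y) \is a GRing.unit] by split; rewrite -opprB unitrN.
rewrite (deriv_Ppoly_at_root Px Py Pz uxy uxz uyz).
rewrite (deriv_Ppoly_at_root Py Px Pz uyx uyz uxz).
rewrite (deriv_Ppoly_at_root Pz Px Py uzx uzy uxy).
have uV : (x - y) * (x - z) * (y - z) \is a GRing.unit by rewrite !unitrM uxy uxz uyz.
have V2 : (x - y) * (x - z) * (y - z) = (y - x) * (y - z) * (z - x) by ring.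
have V3 : (x - y) * (x - z) * (y - z) = (z - x) * (z - y) * (x - y) by ring.
apply: (mulIr uV); rewrite mul0r mulrDl mulrDl [in X in _ + X + _]V2 [in X in _ + X]V3.
rewrite !(mulrA _ (_ * _)) !divrK ?unitrM ?uxy ?uxz ?uyx ?uyz ?uzx ?uzy //.
by ring.
Qed.

Lemma Ppoly_partial_fractions (l : 'I_3 -> R) :
  (forall i, root (Ppoly R) (l i)) ->
  (forall i j, i != j -> (l i - l j) \is a GRing.unit) ->
  \sum_(i < 3) (l i + 1) / (Ppoly R)^`().[l i] = 0.
Proof.
move=> Pl ul; rewrite !big_ord_recr big_ord0 /= add0r.
by apply: Ppoly_partial_fractions3; rewrite ?Pl ?ul.
Qed.

Lemma Ppoly_root_cube_ratio x m :
  root (Ppoly R) x -> m ^+ 3 = x -> ((x ^+ 2 - x) / m) ^+ 3 = 2%:R.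
Proof.
move=> Px m3x; have ux := Ppoly_root_unit Px.
have um : m \is a GRing.unit by rewrite -(unitrX_pos _ (isT : (0 < 3)%N)) m3x.
have cube : (x ^+ 2 - x) ^+ 3 = 2%:R * x.
  move: Px; rewrite root_PpolyE => /eqP Px; rewrite -[RHS]add0r -Px.
  have -> : (x ^+ 2 - x) ^+ 3 = (x ^+ 3 - x ^+ 2 - x - 1)
      * (x ^+ 3 - 2%:R * x ^+ 2 + 2%:R * x) + 2%:R * x by ring.
  by rewrite Px mul0r.
by rewrite exprMn exprVn cube m3x mulrK.
Qed.

Lemma Ppoly_weighted_sum_eq0 (l m : 'I_3 -> R) t :
  (forall i, root (Ppoly R) (l i)) ->
  (forall i j, i != j -> (l i - l j) \is a GRing.unit) ->
  t \is a GRing.unit -> (forall i, l i ^+ 2 - l i = t * m i) ->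
  \sum_(i < 3) l i * (Ppoly R)^`().[l i]^-1 * m i = 0.
Proof.
move=> Pl ul ut lm; apply: (mulrI ut); rewrite mulr0 mulr_sumr.
rewrite -[RHS](Ppoly_partial_fractions Pl ul); apply: eq_bigr => i _.
have := Pl i; rewrite root_PpolyE => /eqP Pli.
have -> : l i + 1 = l i * (l i ^+ 2 - l i) - (l i ^+ 3 - l i ^+ 2 - l i - 1) by ring.
by rewrite Pli subr0 lm; ring.
Qed.

End CubicRoots.

Lemma expr3_eq1_ndvd (R : nzRingType) (c : R) (N : nat) :
  ~~ (3 %| N)%N -> c ^+ 3 = 1 -> c ^+ N = 1 -> c = 1.
Proof.
move=> N3 c3 cN.
have cNmod : c ^+ (N %% 3) = 1.
  by rewrite -cN {2}(divn_eq N 3) exprD mulnC exprM c3 expr1n mul1r.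
move: N3 (ltn_mod N 3) cNmod; rewrite /dvdn.
by case: (N %% 3)%N => [|[|[|]]] //= _ _ c2; rewrite -c3 exprS c2 mulr1.
Qed.

Section ZpPrimePower.
Variables p k : nat.
Hypothesis p_pr : prime p.
Let m := (p ^ k.+1)%N.

Lemma pexp_gt1 : (1 < m)%N.
Proof. by rewrite /m -{1}(expn0 p) ltn_exp2l // prime_gt1. Qed.

Lemma val_Zp_nat (a : nat) : ((a%:R : 'Z_m) : nat) = (a %% m)%N.
Proof. by rewrite Zp_nat /= Zp_cast ?pexp_gt1. Qed.

Lemma Zp_pexp_unitE (x : 'Z_m) : (x \is a GRing.unit) = coprime p x.
Proof. by rewrite -{1}[x]natr_Zp unitZpE ?pexp_gt1 // coprime_pexpl. Qed.

Lemma Zp_p_nilpotent : (p%:R : 'Z_m) ^+ k.+1 = 0.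
Proof. by apply: val_inj; rewrite -natrX /= val_Zp_nat modnn. Qed.

Lemma Zp_sub_nilpotent (x y : 'Z_m) :
  (x %% p = y %% p)%N -> (x - y) ^+ k.+1 = 0.
Proof.
move=> xy; have -> : x - y = p%:R * ((x %/ p)%:R - (y %/ p)%:R).
  move: (divn_eq x p) (divn_eq y p); rewrite xy.
  set a := (x %/ p)%N; set b := (y %/ p)%N; set r := (y %% p)%N => xE yE.
  by rewrite -[x in LHS]natr_Zp -[y in LHS]natr_Zp xE yE !natrD !natrM; ring.
by rewrite exprMn Zp_p_nilpotent mul0r.
Qed.

Lemma Zp_nonunit_sub (x y : 'Z_m) :
  ~~ ((x - y) \is a GRing.unit) -> (x %% p = y %% p)%N.
Proof.
rewrite Zp_pexp_unitE prime_coprime // negbK => /dvdnP[q dxy].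
have -> : (x : nat) = (((y : nat) + ((x - y)%R : 'Z_m)) %% m)%N.
  by rewrite -val_Zp_nat natrD !natr_Zp addrC subrK.
rewrite modn_dvdm ?dvdn_exp // dxy.
by rewrite addnC modnMDl.
Qed.

Lemma Zp_44_unit : p != 2%N -> p != 11%N -> (44%:R : 'Z_m) \is a GRing.unit.
Proof.
move=> p2 p11; rewrite Zp_pexp_unitE val_Zp_nat prime_coprime //.
rewrite /dvdn modn_dvdm ?dvdn_exp //; apply/negP => pd.
have : p \in primes 44 by rewrite mem_primes p_pr /=; exact pd.
by rewrite (_ : primes 44 = [:: 2; 11]%N) // !inE (negPf p2) (negPf p11).
Qed.

Lemma Zp_cube_inj (a b : 'Z_m) : (p %% 3 = 2)%N ->
  b \is a GRing.unit -> a ^+ 3 = b ^+ 3 -> a = b.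
Proof.
move=> p3 ub ab; set c := a / b.
have c3 : c ^+ 3 = 1 by rewrite /c exprMn exprVn ab mulrV // unitrX.
have uc : c \is a GRing.unit by rewrite -(unitrX_pos _ (isT : (0 < 3)%N)) c3 unitr1.
have c_totient : c ^+ totient m = 1.
  have cop : coprime c m by rewrite coprime_sym /m coprime_pexpl // -Zp_pexp_unitE.
  apply: val_inj; rewrite -[c in LHS]natr_Zp -natrX /= val_Zp_nat.
  by rewrite Euler_exp_totient // Zp_cast ?pexp_gt1.
have totient3 : ~~ (3 %| totient m)%N.
  rewrite /m totient_pfactor // Euclid_dvdM // Euclid_dvdX // negb_or negb_and.
  apply/andP; split; [|apply/orP; left]; apply/negP => /dvdnP[q].
  - by move: p3 => /[swap] pq; rewrite -(prednK (prime_gt0 p_pr)) pq -addn1 modnMDl.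
  - by move: p3 => /[swap] ->; rewrite modnMl.
by rewrite -(divrK ub a) -/c (expr3_eq1_ndvd totient3 c3 c_totient) mul1r.
Qed.

End ZpPrimePower.

Lemma padic_coherent_modp (p : nat) (x : padic_seq p) :
  padic_coherent x -> forall n, ((x n : nat) %% p = (x 0%N : nat) %% p)%N.
Proof.
move=> xc; elim=> [//|n IHn].
by rewrite -IHn -(xc n) modn_dvdm ?dvdn_exp.
Qed.

Lemma padic_Ppoly_roots_sub_unit (p : nat) (x y : padic_seq p) :
  prime p -> p != 2%N -> p != 11%N ->
  padic_coherent x -> padic_coherent y ->
  (forall n, root (Ppoly _) (x n)) -> (forall n, root (Ppoly _) (y n)) ->
  (exists n, x n != y n) -> forall n, (x n - y n) \is a GRing.unit.
Proof.
move=> p_pr p2 p11 xc yc Px Py [n0 xy0] n.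
apply: contraT => /(Zp_nonunit_sub p_pr).
rewrite !padic_coherent_modp // -(padic_coherent_modp xc n0).
rewrite -(padic_coherent_modp yc n0) => /(Zp_sub_nilpotent p_pr).
move/(Ppoly_root_eq_nilpotent (Zp_44_unit _ p_pr p2 p11) (Px n0) (Py n0)).
by move/eqP; rewrite (negPf xy0).
Qed.

Theorem proposition15 (p : nat) (lam mu : 'I_3 -> padic_seq p) :
  prime p -> p != 2%N -> p != 11%N -> (p %% 3 = 2)%N ->
  (forall i, padic_coherent (lam i)) ->
  (forall i, padic_coherent (mu i)) ->
  (forall i n, root (Ppoly _) (lam i n)) ->
  (forall i j : 'I_3, i != j -> exists n, lam i n != lam j n) ->
  (forall i n, mu i n ^+ 3 = lam i n) ->
  forall n : nat,
    \sum_(i < 3) lam i n * ((Ppoly _)^`()).[lam i n]^-1 * mu i n = 0.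
Proof.
move=> p_pr p2 p11 p3 lam_c _ Plam lam_neq mu3 n.
have u_diff i j : i != j -> (lam i n - lam j n) \is a GRing.unit.
  have := padic_Ppoly_roots_sub_unit p_pr p2 p11 (lam_c i) (lam_c j) (Plam i) (Plam j).
  by move=> sub_unit /lam_neq /sub_unit.
have u_mu i : mu i n \is a GRing.unit.
  by rewrite -(unitrX_pos _ (isT : (0 < 3)%N)) mu3 (Ppoly_root_unit (Plam i n)).
pose t i := (lam i n ^+ 2 - lam i n) / mu i n.
have t3 i : t i ^+ 3 = 2%:R := Ppoly_root_cube_ratio (Plam i n) (mu3 i n).
have u_t i : t i \is a GRing.unit.
  rewrite -(unitrX_pos _ (isT : (0 < 3)%N)) t3.
  by move: (Zp_44_unit n p_pr p2 p11); rewrite (natrM _ 2 22) unitrM => /andP[].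
apply: (Ppoly_weighted_sum_eq0 (Plam^~ n) u_diff (u_t ord0)) => i.
have t_const : t ord0 = t i :=
  Zp_cube_inj p_pr p3 (u_t i) (etrans (t3 ord0) (esym (t3 i))).
by rewrite t_const divrK ?u_mu.
Qed.
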